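(* Let $x\in\{0,1,2,3\}^n$. Let $x'$ be the subsequence of $x$ obtained by deleting all $1$'s and $3$'s, and $x''$ the subsequence obtained by deleting all $0$'s and $2$'s. If every maximal run of $0$'s in $x'$ and every maximal run of $3$'s in $x''$ has length at most $\log n+3$, then $x$ is regular.
   Context: Logarithms are base $2$. Define the weight $w:\{0,1,2,3\}\to\mathbb{R}$ by $w(0)=0$, $w(1)=1$, $w(2)=2\log n+11$, $w(3)=2\log n+12$. A string $x\in\{0,1,2,3\}^n$ is regular if for every symbol $a\in\{0,1,2,3\}$ and all $1\le j\le k\le n$ such that some $i\in[j,k]$ has $x_i\ne a$, it holds that $\sum_{i=j}^k (w(x_i)-w(a))\neq 0$. *)

From Stdlib Require Import Reals Lra Lia List Arith.
Import ListNotations.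
Open Scope R_scope.

Definition log2R (n : nat) : R := ln (INR n) / ln 2.

Definition w (n a : nat) : R :=
  match a with
  | 0%nat => 0
  | 1%nat => 1
  | 2%nat => 2 * log2R n + 11
  | _ => 2 * log2R n + 12
  end.

(* a string over {0,1,2,3}: a list of naturals all < 4; positions are 0-based *)
Definition is_string (x : list nat) : Prop := Forall (fun a => (a < 4)%nat) x.

Definition sum_range (j k : nat) (f : nat -> R) : R :=
  fold_right Rplus 0 (map f (seq j (S k - j))).

Definition regular (x : list nat) : Prop :=
  let n := length x in
  forall (a : nat), (a < 4)%nat ->
  forall (j k : nat), (j <= k)%nat -> (k < n)%nat ->
  (exists i, (j <= i <= k)%nat /\ nth i x 0%nat <> a) ->
  sum_range j k (fun i => w n (nth i x 0%nat) - w n a) <> 0.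

Definition max_run (l : list nat) (c j k : nat) : Prop :=
  (j <= k)%nat /\ (k < length l)%nat /\
  (forall i, (j <= i <= k)%nat -> nth i l 0%nat = c) /\
  (j = 0%nat \/ nth (j - 1) l 0%nat <> c) /\
  (S k = length l \/ nth (S k) l 0%nat <> c).

Definition del13 (x : list nat) : list nat :=
  filter (fun a => orb (Nat.eqb a 0) (Nat.eqb a 2)) x.
Definition del02 (x : list nat) : list nat :=
  filter (fun a => orb (Nat.eqb a 1) (Nat.eqb a 3)) x.

(* Fix a window [j, k], a symbol a, L = log n, and let c_b count the b's in the window; the
   window sum is  sum_b c_b (w b - w a).  In x' the 0's of the window are separated only by its
   2's, so they form at most c_2 + 1 runs of length at most L + 3: c_0 <= (c_2 + 1)(L + 3), and
   likewise c_3 <= (c_1 + 1)(L + 3) in x''.  For a = 0 (resp. a = 3) all terms have the same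
   sign and one is nonzero.  For a = 1 each 0 costs only 1 while a single 2 or 3 brings about
   2L + 10, which beats the at most (c_2 + 1)(L + 3) zeros; a = 2 is the mirror image. *)

From Stdlib Require Import Reals List Arith Lra Lia.
Import ListNotations.
Open Scope R_scope.

Notation cnt l b := (count_occ Nat.eq_dec l b%nat).

Lemma map_nth_seq {A : Type} (l : list A) (d : A) j m : (j + m <= length l)%nat ->
  map (fun i => nth i l d) (seq j m) = firstn m (skipn j l).
Proof.
  intros Hjm. apply nth_ext with (d := d) (d' := d).
  - rewrite length_map, length_seq, length_firstn, length_skipn. lia.
  - intros i Hi. rewrite length_map, length_seq in Hi.
    rewrite nth_firstn, nth_skipn. destruct (Nat.ltb_spec i m); [|lia].
    rewrite nth_indep with (d' := (fun i => nth i l d) 0%nat)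
      by (rewrite length_map, length_seq; lia).
    rewrite (map_nth (fun i => nth i l d)), seq_nth by lia. reflexivity.
Qed.

Lemma app_segment {A : Type} (l : list A) (d : A) j m : (j + m <= length l)%nat ->
  l = firstn j l ++ map (fun i => nth i l d) (seq j m) ++ skipn (j + m) l.
Proof.
  intros Hjm. rewrite map_nth_seq by exact Hjm.
  rewrite <- (firstn_skipn j l) at 1. f_equal.
  rewrite <- (firstn_skipn m (skipn j l)) at 1. rewrite skipn_skipn, Nat.add_comm.
  reflexivity.
Qed.

Lemma count_occ_lt_length {A : Type} eq_dec (l : list A) a b :
  In b l -> b <> a -> (count_occ eq_dec l a < length l)%nat.
Proof.
  induction l as [|y l IH]; intros Hb Hba; [destruct Hb|]. cbn [length].
  destruct Hb as [->|Hb].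
  - rewrite count_occ_cons_neq by exact Hba. pose proof (count_occ_bound eq_dec a l). lia.
  - specialize (IH Hb Hba). destruct (eq_dec y a) as [->|Hy].
    + rewrite count_occ_cons_eq by reflexivity. lia.
    + rewrite count_occ_cons_neq by exact Hy. lia.
Qed.

Lemma count_occ_filter {A : Type} eq_dec (f : A -> bool) l x : f x = true ->
  count_occ eq_dec (filter f l) x = count_occ eq_dec l x.
Proof.
  intros Hx. induction l as [|y l IH]; [reflexivity|]. cbn [filter count_occ].
  destruct (eq_dec y x) as [->|Hy].
  - rewrite Hx. cbn [count_occ]. destruct (eq_dec x x); [|contradiction]. now f_equal.
  - destruct (f y); cbn [count_occ]; [destruct (eq_dec y x); [contradiction|]|]; exact IH.
Qed.

Definition run_bounded (l : list nat) (c : nat) (B : R) : Prop :=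
  forall A m C, l = A ++ repeat c m ++ C -> INR m <= B.

Lemma run_bounded_infix A l C c B : run_bounded (A ++ l ++ C) c B -> run_bounded l c B.
Proof.
  intros Hrun A' m C' ->. apply (Hrun (A ++ A') m (C' ++ C)).
  now rewrite <- !app_assoc.
Qed.

Lemma max_run_app_repeat (A C : list nat) c m :
  (A = [] \/ nth (length A - 1) A 0%nat <> c) -> (C = [] \/ nth 0 C 0%nat <> c) ->
  max_run (A ++ repeat c (S m) ++ C) c (length A) (length A + m).
Proof.
  intros HA HC. unfold max_run. rewrite !length_app, repeat_length.
  repeat split; try lia.
  - intros i Hi. rewrite app_nth2, app_nth1 by (rewrite ?repeat_length; lia).
    apply nth_repeat_lt. lia.
  - destruct A as [|y A]; [now left|right]. destruct HA as [HA|HA]; [discriminate|].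
    rewrite app_nth1 by (simpl; lia). exact HA.
  - destruct C as [|y C]; [left; simpl; lia|right]. destruct HC as [HC|HC]; [discriminate|].
    rewrite app_assoc.
    replace (S (length A + m)) with (length (A ++ repeat c (S m)))
      by (rewrite length_app, repeat_length; lia).
    rewrite nth_middle. exact HC.
Qed.

Lemma repeat_le_of_max_run l c B :
  (forall j k, max_run l c j k -> INR (S k - j) <= B) ->
  forall A m C, l = A ++ repeat c (S m) ++ C -> INR (S m) <= B.
Proof.
  intros Hmax A m C. remember (length A + length C)%nat as d eqn:Hd. revert A m C Hd.
  induction d as [d IH] using lt_wf_ind. intros A m C Hd ->.
  assert (Hlonger : forall A' C', (length A' + length C' < d)%nat ->
            A ++ repeat c (S m) ++ C = A' ++ repeat c (S (S m)) ++ C' -> INR (S m) <= B).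
  { intros A' C' Hlt Heq. apply Rle_trans with (INR (S (S m))); [apply le_INR; lia|].
    exact (IH _ Hlt A' (S m) C' eq_refl Heq). }
  assert (HA : (A = [] \/ nth (length A - 1) A 0%nat <> c) \/ exists A', A = A' ++ [c]).
  { destruct A as [|y A' _] using rev_ind; [now left; left|].
    destruct (Nat.eq_dec y c) as [->|Hy]; [right; now exists A'|left; right].
    replace (length (A' ++ [y]) - 1)%nat with (length A') by (rewrite length_app; simpl; lia).
    rewrite nth_middle. exact Hy. }
  assert (HC : (C = [] \/ nth 0 C 0%nat <> c) \/ exists C', C = c :: C').
  { destruct C as [|z C']; [now left; left|].
    destruct (Nat.eq_dec z c) as [->|Hz]; [right; now exists C'|left; right; exact Hz]. }
  destruct HA as [HA|[A' ->]]; [destruct HC as [HC|[C' ->]]|].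
  - pose proof (Hmax _ _ (max_run_app_repeat A C c m HA HC)) as Hrun.
    replace (S (length A + m) - length A)%nat with (S m) in Hrun by lia. exact Hrun.
  - apply (Hlonger A C'); [rewrite Hd; simpl; lia|].
    change (repeat c (S (S m))) with (c :: repeat c (S m)).
    now rewrite repeat_cons, <- app_assoc.
  - apply (Hlonger A' C); [rewrite Hd, length_app; simpl; lia|].
    now rewrite <- app_assoc.
Qed.

Lemma run_bounded_of_max_run l c B : 0 <= B ->
  (forall j k, max_run l c j k -> INR (S k - j) <= B) -> run_bounded l c B.
Proof.
  intros HB Hmax A [|m] C Hl; [simpl; lra|].
  exact (repeat_le_of_max_run l c B Hmax A m C Hl).
Qed.

Lemma run_count_le c d B s : c <> d -> Forall (fun y => y = c \/ y = d) s ->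
  forall m, run_bounded (repeat c m ++ s) c B ->
  INR (m + cnt s c) <= (INR (cnt s d) + 1) * B.
Proof.
  intros Hcd. induction s as [|y s IH]; intros Hs m Hrun.
  - cbn [count_occ]. rewrite Nat.add_0_r, Rplus_0_l, Rmult_1_l.
    apply (Hrun [] m []). now rewrite app_nil_r.
  - inversion_clear Hs as [|? ? Hy Hs']. destruct Hy as [->| ->].
    + rewrite count_occ_cons_eq, count_occ_cons_neq by auto.
      rewrite <- Nat.add_succ_comm. apply IH; [exact Hs'|].
      replace (repeat c (S m) ++ s) with (repeat c m ++ c :: s); [exact Hrun|].
      change (repeat c (S m)) with (c :: repeat c m).
      now rewrite repeat_cons, <- app_assoc.
    + rewrite count_occ_cons_neq, count_occ_cons_eq by auto.
      assert (Hm : INR m <= B) by exact (Hrun [] m (d :: s) eq_refl).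
      assert (Hrest : INR (0 + cnt s c) <= (INR (cnt s d) + 1) * B).
      { apply IH; [exact Hs'|]. apply (run_bounded_infix (repeat c m ++ [d]) _ []).
        now rewrite app_nil_r, <- app_assoc. }
      rewrite plus_INR, S_INR. rewrite Nat.add_0_l in Hrest. lra.
Qed.

Lemma segment_count_le (f : nat -> bool) c d B x A s C :
  c <> d -> (forall y, f y = true <-> y = c \/ y = d) ->
  x = A ++ s ++ C -> run_bounded (filter f x) c B ->
  INR (cnt s c) <= (INR (cnt s d) + 1) * B.
Proof.
  intros Hcd Hf -> Hrun. rewrite !filter_app in Hrun. apply run_bounded_infix in Hrun.
  rewrite <- (count_occ_filter _ f s c), <- (count_occ_filter _ f s d) by (apply Hf; auto).
  apply (run_count_le c d B _ Hcd) with (m := 0%nat); [|exact Hrun].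
  apply Forall_forall. intros y Hy. apply filter_In in Hy. apply Hf, Hy.
Qed.

Lemma length_counts s : Forall (fun b => b < 4)%nat s ->
  length s = (cnt s 0 + cnt s 1 + cnt s 2 + cnt s 3)%nat.
Proof.
  induction s as [|b s IH]; intros Hs; [reflexivity|].
  inversion_clear Hs as [|? ? Hb Hs']. cbn [length]. rewrite (IH Hs').
  destruct b as [|[|[|[|b]]]]; [| | | |lia]; cbn; lia.
Qed.

Lemma sum_map_counts (g : nat -> R) s : Forall (fun b => b < 4)%nat s ->
  fold_right Rplus 0 (map g s) =
  INR (cnt s 0) * g 0%nat + INR (cnt s 1) * g 1%nat + INR (cnt s 2) * g 2%nat
  + INR (cnt s 3) * g 3%nat.
Proof.
  induction s as [|b s IH]; intros Hs; [simpl; ring|].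
  inversion_clear Hs as [|? ? Hb Hs']. cbn [map fold_right]. rewrite (IH Hs').
  destruct b as [|[|[|[|b]]]]; [| | | |lia]; cbn -[INR]; rewrite S_INR; ring.
Qed.

(* [ln] is [0] on non-positive arguments, so [n = 0] is allowed. *)
Lemma log2R_ge0 n : 0 <= log2R n.
Proof.
  unfold log2R. apply Rmult_le_pos; [|left; apply Rinv_0_lt_compat; pose proof ln_lt_2; lra].
  destruct n as [|n].
  - simpl INR. unfold ln. destruct (Rlt_dec 0 0) as [H|_]; [exfalso; lra|apply Rle_refl].
  - rewrite <- ln_1. destruct n as [|n]; [simpl; lra|].
    left. apply ln_increasing; [lra|]. rewrite !S_INR. pose proof (pos_INR n). lra.
Qed.

Lemma dominated_sum_neq0 (L : R) (u v t : nat) : 0 <= L ->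
  INR u <= (INR v + 1) * (L + 3) -> (0 < u + v + t)%nat ->
  INR v * (2 * L + 10) + INR t * (2 * L + 11) - INR u <> 0.
Proof.
  intros HL Hu Hpos.
  destruct v as [|v]; [destruct t as [|t]|]; change (INR 0) with 0 in *.
  - destruct u as [|u]; [lia|]. rewrite S_INR. pose proof (pos_INR u).
    apply Rlt_not_eq. lra.
  - rewrite S_INR. pose proof (pos_INR t). apply Rgt_not_eq. nra.
  - rewrite S_INR in *. pose proof (pos_INR v). pose proof (pos_INR t).
    apply Rgt_not_eq. nra.
Qed.

Lemma weighted_counts_neq0 n (c : nat -> nat) a : (a < 4)%nat ->
  (c a < c 0 + c 1 + c 2 + c 3)%nat ->
  INR (c 0%nat) <= (INR (c 2%nat) + 1) * (log2R n + 3) ->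
  INR (c 3%nat) <= (INR (c 1%nat) + 1) * (log2R n + 3) ->
  INR (c 0%nat) * (w n 0 - w n a) + INR (c 1%nat) * (w n 1 - w n a)
  + INR (c 2%nat) * (w n 2 - w n a) + INR (c 3%nat) * (w n 3 - w n a) <> 0.
Proof.
  intros Ha Hlt H0 H3. pose proof (log2R_ge0 n) as HL. set (L := log2R n) in *.
  pose proof (pos_INR (c 0%nat)). pose proof (pos_INR (c 1%nat)).
  pose proof (pos_INR (c 2%nat)). pose proof (pos_INR (c 3%nat)).
  destruct a as [|[|[|[|a]]]]; [| | | |lia]; cbn [w]; fold L.
  - assert (Hsum : INR 1 <= INR (c 1%nat + c 2%nat + c 3%nat)) by (apply le_INR; lia).
    rewrite !plus_INR in Hsum. change (INR 1) with 1 in Hsum. apply Rgt_not_eq. nra.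
  - intros E. apply (dominated_sum_neq0 L (c 0%nat) (c 2%nat) (c 3%nat));
      [exact HL|exact H0|lia|lra].
  (* b |-> 3 - b maps w to w 3 - w and swaps the roles of (c 0, c 2, c 3) and (c 3, c 1, c 0). *)
  - intros E. apply (dominated_sum_neq0 L (c 3%nat) (c 1%nat) (c 0%nat));
      [exact HL|exact H3|lia|lra].
  - assert (Hsum : INR 1 <= INR (c 0%nat + c 1%nat + c 2%nat)) by (apply le_INR; lia).
    rewrite !plus_INR in Hsum. change (INR 1) with 1 in Hsum. apply Rlt_not_eq. nra.
Qed.

Theorem lemma1 (x : list nat) :
  is_string x ->
  (forall j k, max_run (del13 x) 0 j k ->
     INR (S k - j) <= log2R (length x) + 3) ->
  (forall j k, max_run (del02 x) 3 j k ->
     INR (S k - j) <= log2R (length x) + 3) ->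
  regular x.
Proof.
  intros Hx4 Hruns0 Hruns3 a Ha j k Hjk Hk [i [Hi Hia]].
  pose proof (log2R_ge0 (length x)) as HL.
  set (s := map (fun i => nth i x 0%nat) (seq j (S k - j))).
  assert (Hx : x = firstn j x ++ s ++ skipn (j + (S k - j)) x)
    by (apply app_segment; lia).
  assert (Hs4 : Forall (fun b => b < 4)%nat s).
  { unfold is_string in Hx4. rewrite Hx in Hx4.
    apply Forall_app in Hx4 as [_ Hx4]. apply Forall_app in Hx4 as [Hs4 _]. exact Hs4. }
  assert (Hnot_all_a : (cnt s a < length s)%nat).
  { apply count_occ_lt_length with (b := nth i x 0%nat); [|exact Hia].
    apply (in_map (fun i => nth i x 0%nat)), in_seq. lia. }
  unfold sum_range.
  rewrite <- (map_map (fun i => nth i x 0%nat) (fun b => w (length x) b - w (length x) a)).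
  fold s. rewrite sum_map_counts by exact Hs4.
  apply weighted_counts_neq0; [exact Ha|rewrite <- length_counts by exact Hs4; exact Hnot_all_a|..].
  - eapply (segment_count_le (fun b => orb (Nat.eqb b 0) (Nat.eqb b 2)) 0 2); [lia| |exact Hx|].
    + intros y. rewrite Bool.orb_true_iff, !Nat.eqb_eq. reflexivity.
    + apply run_bounded_of_max_run; [lra|exact Hruns0].
  - eapply (segment_count_le (fun b => orb (Nat.eqb b 1) (Nat.eqb b 3)) 3 1); [lia| |exact Hx|].
    + intros y. rewrite Bool.orb_true_iff, !Nat.eqb_eq. tauto.
    + apply run_bounded_of_max_run; [lra|exact Hruns3].
Qed.
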